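(* For every real $M>0$ there exist connected graphs $G$ and $H$, with $H$ a subgraph of $G$, such that $$\frac{\dim(H)}{\dim(G)}>M,\qquad \frac{\mathrm{bdim}(H)}{\mathrm{bdim}(G)}>M,\qquad \frac{\mathrm{adim}(H)}{\mathrm{adim}(G)}>M.$$
   Context: $d(x,y)$ denotes graph distance. A set $S\subseteq V(G)$ is a resolving set if for all distinct $x,y$ there is $z\in S$ with $d(x,z)\ne d(y,z)$. $\dim(G)$ is the minimum size of a resolving set. For an integer $k\ge1$ let $d_k(x,y)=\min\{d(x,y),k+1\}$. A set $A\subseteq V(G)$ is an adjacency resolving set if for all distinct $x,y\in V(G)$ there is $z\in A$ with $d_1(x,z)\ne d_1(y,z)$. $\mathrm{adim}(G)$ is the minimum size of an adjacency resolving set. A function $f:V(G)\to\mathbb{Z}_{\ge 0}$ is a resolving broadcast of $G$ if for all distinct $x,y\in V(G)$ there is $z\in V(G)$ with $f(z)=i>0$ and $d_i(x,z)\ne d_i(y,z)$. The broadcast dimension $\mathrm{bdim}(G)$ is the minimum of $\sum_{v\in V(G)}f(v)$ over all resolving broadcasts $f$ of $G$. *)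

From mathcomp Require Import all_boot.
From mathcomp Require Import boolp.
From Stdlib Require Import Reals.
Set Implicit Arguments. Unset Strict Implicit. Unset Printing Implicit Defensive.

Record graph := Graph {
  vert : finType;
  adj : rel vert;
  adj_sym : symmetric adj;
  adj_irr : irreflexive adj }.

Fixpoint ball (G : graph) (k : nat) (x : vert G) : {set vert G} :=
  match k with
  | 0 => [set x]
  | k'.+1 => ball k' x :|: [set y | [exists z in ball k' x, adj z y]]
  end.

Definition connected (G : graph) : Prop :=
  forall x y : vert G, exists k, y \in ball k x.

(* graph distance (meaningful for connected graphs: least k with y in ball k x) *)
Definition dist (G : graph) (x y : vert G) : nat :=
  match pselect (exists k, y \in ball k x) with
  | left h => ex_minn h
  | right _ => 0
  end.

Definition distk (G : graph) (k : nat) (x y : vert G) : nat := minn (dist x y) k.+1.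

Definition resolving (G : graph) (S : {set vert G}) : Prop :=
  forall x y : vert G, x <> y -> exists2 z, z \in S & dist x z <> dist y z.

Definition adj_resolving (G : graph) (A : {set vert G}) : Prop :=
  forall x y : vert G, x <> y -> exists2 z, z \in A & distk 1 x z <> distk 1 y z.

Definition resolving_broadcast (G : graph) (f : vert G -> nat) : Prop :=
  forall x y : vert G, x <> y ->
    exists z, 0 < f z /\ distk (f z) x z <> distk (f z) y z.

(* minimum of a nonempty (or default 0) Prop-defined set of naturals *)
Definition nat_min (P : nat -> Prop) : nat :=
  match pselect (exists n, P n) with
  | left h => ex_minn (P := fun n => `[< P n >]) (let: ex_intro n hn := h in ex_intro _ n (asboolT hn))
  | right _ => 0
  end.

Definition mdim (G : graph) : nat :=
  nat_min (fun n => exists S : {set vert G}, resolving S /\ #|S| = n).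
Definition adim (G : graph) : nat :=
  nat_min (fun n => exists A : {set vert G}, adj_resolving A /\ #|A| = n).
Definition bdim (G : graph) : nat :=
  nat_min (fun n => exists f : vert G -> nat, resolving_broadcast f /\
                      \sum_(v : vert G) f v = n).

Definition subgraph (H G : graph) : Prop :=
  exists phi : vert H -> vert G, injective phi /\
    forall u v : vert H, adj u v -> adj (phi u) (phi v).

From Stdlib Require Import Reals Lra.
From mathcomp Require Import all_boot boolp perm zify.
Set Implicit Arguments. Unset Strict Implicit.

(* For a finite type X let G be the "apex incidence graph": an apex adjacent
   to every other vertex, one vertex per point of X and one per subset of X,
   a point adjacent to the subsets containing it.  H is the spanning star
   centred at the apex, a subgraph of G.
   - In every connected graph dim <= bdim <= adim: an adjacency resolving set
     gives a resolving broadcast of the same cost (its indicator), and the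
     support of a resolving broadcast is a resolving set.
   - Upper bound in G: the apex and the points form an adjacency resolving set
     (two subsets are told apart by a point in their symmetric difference),
     so adim G <= |X| + 1.
   - Lower bound in H: the leaves of a star are pairwise twins, a swap of
     twins is an automorphism, so every resolving set contains all leaves but
     one and dim H >= |X| + 2^|X| - 1.
   Taking |X| = k with N (k + 1) + 1 < 2^k for N > M yields all three ratios
   larger than M. *)

Section Distances.
Variable G : graph.
Hypothesis cG : connected G.

Lemma ball_mono (x : vert G) i j : i <= j -> ball i x \subset ball j x.
Proof.
move=> /subnK <-; elim: (j - i) => [|d IH] //=.
exact: subset_trans IH (subsetUl _ _).
Qed.

Lemma distP (x z : vert G) k : (dist x z <= k) = (z \in ball k x).
Proof.
rewrite /dist; case: pselect => [h|]; last by case; exact: cG.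
case: ex_minnP => m Hm Hmin; apply/idP/idP => [le|]; last exact: Hmin.
exact: subsetP (ball_mono x le) _ Hm.
Qed.

Lemma ball1 (x z : vert G) : (z \in ball 1 x) = (z == x) || adj x z.
Proof.
rewrite /= !inE; congr (_ || _).
apply/existsP/idP => [[w /andP [/set1P -> //]]|h].
by exists x; rewrite set11 h.
Qed.

Lemma distk1 (x z : vert G) :
  distk 1 x z = if z == x then 0 else if adj x z then 1 else 2.
Proof.
have := distP x z 0; have := distP x z 1; rewrite ball1 /= in_set1 /distk.
by case: eqP => _ /=; case: (adj x z); case: (dist x z) => [|[|d]].
Qed.

Lemma distk1_self (x y : vert G) : x <> y -> distk 1 x x <> distk 1 y x.
Proof.
move=> xy; rewrite !distk1 eqxx; case: eqVneq => [yx|_]; first by case: xy.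
by case: adj.
Qed.
End Distances.

Section Twins.
Variable G : graph.
Hypothesis cG : connected G.

Lemma ball_auto (s : vert G -> vert G) : involutive s ->
  (forall a b, adj (s a) (s b) = adj a b) ->
  forall k x z, (s z \in ball k (s x)) = (z \in ball k x).
Proof.
move=> sK sA; elim=> [|k IH] x z /=; first by rewrite !in_set1 (inv_eq sK) sK.
rewrite !inE IH; congr (_ || _).
apply/existsP/existsP => -[w /andP [Hw Ha]].
  by exists (s w); rewrite -IH sK Hw -(sA _ z) sK.
by exists (s w); rewrite IH Hw sA.
Qed.

Lemma dist_auto (s : vert G -> vert G) : involutive s ->
  (forall a b, adj (s a) (s b) = adj a b) ->
  forall x z, dist (s x) (s z) = dist x z.
Proof.
move=> sK sA x z.
have le k : (dist (s x) (s z) <= k) = (dist x z <= k) by rewrite !(distP cG) ball_auto.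
by apply/eqP; rewrite eqn_leq le leqnn -le leqnn.
Qed.

Definition twins (u v : vert G) : Prop :=
  forall z, z != u -> z != v -> adj u z = adj v z.

Lemma twins_swap_adj (u v : vert G) : twins u v ->
  forall a b, adj (tperm u v a) (tperm u v b) = adj a b.
Proof.
move=> tw a b.
case: tpermP => [->|->|/eqP au /eqP av]; case: tpermP => [->|->|/eqP bu /eqP bv];
  rewrite ?adj_irr //; first [by rewrite adj_sym | by rewrite tw
  | by rewrite ![adj a _]adj_sym tw | by rewrite ![adj a _]adj_sym -tw].
Qed.

Lemma twins_dist (u v z : vert G) : twins u v -> z != u -> z != v ->
  dist u z = dist v z.
Proof.
move=> tw zu zv; rewrite -(dist_auto (tpermK u v) (twins_swap_adj tw)).
by rewrite tpermL tpermD // eq_sym.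
Qed.
End Twins.

Lemma nat_minP (P : nat -> Prop) : (exists n, P n) -> P (nat_min P).
Proof.
rewrite /nat_min => ex; case: pselect => // h.
by case: ex_minnP => m /asboolP.
Qed.

Lemma nat_min_le (P : nat -> Prop) n : P n -> nat_min P <= n.
Proof.
move=> Pn; rewrite /nat_min; case: pselect => [h|]; last by case; exists n.
by case: ex_minnP => m _; apply; exact/asboolP.
Qed.

Section Resolution.
Variable G : graph.

Definition support (f : vert G -> nat) : {set vert G} := [set v | 0 < f v].
Definition indicator (A : {set vert G}) (v : vert G) : nat := v \in A.

Lemma sum_indicator (A : {set vert G}) : \sum_v indicator A v = #|A|.
Proof.
rewrite -sum1_card [RHS]big_mkcond; apply: eq_bigr => v _.
by rewrite /indicator; case: (v \in A).
Qed.

Lemma card_support (f : vert G -> nat) : #|support f| <= \sum_v f v.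
Proof.
rewrite -sum1_card big_mkcond; apply: leq_sum => v _.
by rewrite inE; case: (f v).
Qed.

Lemma adj_resolving_broadcast (A : {set vert G}) :
  adj_resolving A -> resolving_broadcast (indicator A).
Proof. by move=> rA x y /rA [z zA hz]; exists z; rewrite /indicator zA. Qed.

Lemma broadcast_support_resolving (f : vert G -> nat) :
  resolving_broadcast f -> resolving (support f).
Proof.
move=> rf x y /rf [z [fz hz]]; exists z; first by rewrite inE.
by apply: contra_not hz; rewrite /distk => ->.
Qed.

Lemma adim_witness (A0 : {set vert G}) : adj_resolving A0 ->
  exists A : {set vert G}, adj_resolving A /\ #|A| = adim G.
Proof.
move=> rA0; apply: (nat_minP (P := fun n => exists A : {set vert G}, adj_resolving A /\ #|A| = n)).
by exists #|A0|, A0.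
Qed.

Lemma bdim_witness (f0 : vert G -> nat) : resolving_broadcast f0 ->
  exists f : vert G -> nat, resolving_broadcast f /\ \sum_v f v = bdim G.
Proof.
move=> rf0; apply: (nat_minP (P := fun n => exists f : vert G -> nat,
  resolving_broadcast f /\ \sum_v f v = n)).
by exists (\sum_v f0 v), f0.
Qed.

Lemma mdim_witness (S0 : {set vert G}) : resolving S0 ->
  exists S : {set vert G}, resolving S /\ #|S| = mdim G.
Proof.
move=> rS0; apply: (nat_minP (P := fun n => exists S : {set vert G}, resolving S /\ #|S| = n)).
by exists #|S0|, S0.
Qed.

Lemma bdim_le_adim (A0 : {set vert G}) : adj_resolving A0 -> bdim G <= adim G.
Proof.
move=> /adim_witness [A [rA <-]]; apply: nat_min_le.
by exists (indicator A); rewrite sum_indicator; split => //; exact: adj_resolving_broadcast.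
Qed.

Lemma mdim_le_bdim (f0 : vert G -> nat) : resolving_broadcast f0 -> mdim G <= bdim G.
Proof.
move=> /bdim_witness [f [rf <-]]; apply: leq_trans (card_support f).
by apply: nat_min_le; exists (support f); split => //; exact: broadcast_support_resolving.
Qed.

Hypothesis cG : connected G.

(* In a connected graph the whole vertex set is adjacency resolving, so all
   three parameters are realised. *)
Lemma adj_resolving_setT : adj_resolving [set: vert G].
Proof. by move=> x y xy; exists x; [rewrite inE | exact: distk1_self]. Qed.

Lemma some_resolving : resolving (support (indicator [set: vert G])).
Proof. exact/broadcast_support_resolving/adj_resolving_broadcast/adj_resolving_setT. Qed.

Lemma dimension_chain : mdim G <= bdim G <= adim G.
Proof.
apply/andP; split; last exact: bdim_le_adim adj_resolving_setT.
exact: mdim_le_bdim (adj_resolving_broadcast adj_resolving_setT).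
Qed.

Lemma mdim_gt0 (x y : vert G) : x <> y -> 0 < mdim G.
Proof.
move=> xy; have [S [rS <-]] := mdim_witness some_resolving.
by have [z zS _] := rS x y xy; apply/card_gt0P; exists z.
Qed.

Lemma resolving_meets_twins (S : {set vert G}) (u v : vert G) :
  resolving S -> twins u v -> u <> v -> (u \in S) || (v \in S).
Proof.
move=> rS tw uv; have [z zS] := rS u v uv.
apply: contra_notT => /norP [uS vS]; apply: twins_dist => //.
  by apply: contraNneq uS => <-.
by apply: contraNneq vS => <-.
Qed.

Lemma twin_class_mdim (T : {set vert G}) :
  {in T &, forall u v, twins u v} -> #|T| <= (mdim G).+1.
Proof.
move=> twT; have [S [rS <-]] := mdim_witness some_resolving.
have outside : #|T :\: S| <= 1.
  rewrite leqNgt; apply/card_gt1P => -[u [v []]].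
  rewrite !inE => /andP [uS uT] /andP [vS vT] /eqP uv.
  by have := resolving_meets_twins rS (twT u v uT vT) uv; rewrite (negbTE uS) (negbTE vS).
rewrite -(cardsID S T) -addn1 leq_add //; exact/subset_leq_card/subsetIr.
Qed.
End Resolution.

Lemma apex_connected (G : graph) (c : vert G) :
  (forall y, y != c -> adj c y) -> connected G.
Proof.
move=> hc x y; exists 2.
have cx : c \in ball 1 x.
  by rewrite ball1; case: eqVneq => //= ne; rewrite adj_sym hc // eq_sym.
have [->|yc] := eqVneq y c; first exact: subsetP (ball_mono x (leqnSn 1)) _ cx.
by rewrite /= inE; apply/orP; right; rewrite inE; apply/existsP; exists c; rewrite cx hc.
Qed.

(* The star on option T, centred at None. *)
Section Star.
Variable T : finType.

Definition star_adj : rel (option T) := fun a b => (a == None) (+) (b == None).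

Lemma star_adj_sym : symmetric star_adj.
Proof. by move=> a b; rewrite /star_adj addbC. Qed.

Lemma star_adj_irr : irreflexive star_adj.
Proof. by move=> a; rewrite /star_adj addbb. Qed.

Definition star : graph := Graph star_adj_sym star_adj_irr.

Lemma star_connected : connected star.
Proof. by apply: (@apex_connected star None) => -[]. Qed.

(* Its |T| leaves are pairwise twins, so dim >= |T| - 1. *)
Lemma star_mdim : #|T| <= (mdim star).+1.
Proof.
have := cardsC1 (None : option T); rewrite card_option /= => <-.
apply: (twin_class_mdim star_connected) => u v; rewrite !inE => uN vN z _ _.
by rewrite /= /star_adj (negbTE uN) (negbTE vN).
Qed.
End Star.

(* The point/subset incidence graph of X together with an apex. *)
Section ApexIncidence.
Variable X : finType.
Local Notation vertex := (option (X + {set X})%type).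

Definition incidence_adj : rel vertex := fun a b =>
  match a, b with
  | None, Some _ | Some _, None => true
  | Some (inl i), Some (inr A) | Some (inr A), Some (inl i) => i \in A
  | _, _ => false
  end.

Lemma incidence_adj_sym : symmetric incidence_adj.
Proof. by case=> [[i|A]|] [[j|B]|]. Qed.

Lemma incidence_adj_irr : irreflexive incidence_adj.
Proof. by case=> [[i|A]|]. Qed.

Definition apex_incidence : graph := Graph incidence_adj_sym incidence_adj_irr.

Lemma apex_incidence_connected : connected apex_incidence.
Proof. by apply: (@apex_connected apex_incidence None) => -[]. Qed.

Lemma star_subgraph : subgraph (star (X + {set X})%type) apex_incidence.
Proof. by exists id; split => // -[[i|A]|] [[j|B]|]. Qed.

Definition apex_points : {set vertex} :=
  None |: [set Some (inl i) | i : X].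

Lemma card_apex_points : #|apex_points| <= #|X|.+1.
Proof.
rewrite cardsU1 -add1n leq_add ?leq_b1 //.
exact: leq_trans (leq_imset_card _ _) _.
Qed.

Lemma notin_apex_points (x : vertex) :
  x \notin apex_points -> exists A, x = Some (inr A).
Proof.
case: x => [[i|A]|]; [|by exists A|by rewrite setU11].
by rewrite inE => /norP [_ /imsetP []]; exists i.
Qed.

(* The apex and the points resolve at level one: two subset vertices are
   separated by a point lying in exactly one of them. *)
Lemma apex_points_resolving : adj_resolving (G := apex_incidence) apex_points.
Proof.
have cG := apex_incidence_connected.
move=> x y xy.
have [xP|/notin_apex_points [A ex]] := boolP (x \in apex_points).
  by exists x => //; exact: distk1_self.
have [yP|/notin_apex_points [B ey]] := boolP (y \in apex_points).
  by exists y => //; apply/nesym/(distk1_self cG)/nesym.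
subst x y; have [i hi] : exists i, (i \in A) != (i \in B).
  apply/existsP; apply: contra_notT xy => /existsPn sameAB.
  by congr (Some (inr _)); apply/setP => i; apply/eqP/negbNE.
exists (Some (inl i)); first by rewrite !inE; apply/orP; right; apply/imsetP; exists i.
by rewrite !(distk1 cG) /=; case: (i \in A) (i \in B) hi => [] [].
Qed.

Lemma apex_incidence_adim : adim apex_incidence <= #|X|.+1.
Proof.
apply: leq_trans card_apex_points; apply: nat_min_le.
by exists apex_points; split => //; exact: apex_points_resolving.
Qed.
End ApexIncidence.

Lemma card_powertype (X : finType) : 2 ^ #|X| <= #|{set X}|.
Proof. by rewrite -cardsT -card_powerset max_card. Qed.

Lemma exp2_beats_linear N : exists k, N * k.+1 + 1 < 2 ^ k.
Proof.
pose m := 3 * N + 1; exists (m + m).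
have : m < 2 ^ m by apply: ltn_expl.
rewrite expnD; nia.
Qed.

Open Scope R_scope.

Lemma ratio_gt (M : R) N a b : M < INR N -> (0 < b)%N -> (N * b < a)%N ->
  INR a / INR b > M.
Proof.
move=> hM /ltP b0 /ltP hab.
have hb : 0 < INR b by apply: lt_0_INR.
have : INR N * INR b < INR a by rewrite -mult_INR; apply: lt_INR.
move=> h; apply: Rlt_gt; apply: Rlt_trans hM _.
apply: (Rmult_lt_reg_r (INR b)) => //.
rewrite /Rdiv Rmult_assoc Rinv_l; lra.
Qed.

Theorem theorem5p7 : forall M : R, 0 < M ->
  exists G H : graph, connected G /\ connected H /\ subgraph H G /\
    INR (mdim H) / INR (mdim G) > M /\
    INR (bdim H) / INR (bdim G) > M /\
    INR (adim H) / INR (adim G) > M.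
Proof.
move=> M _; have [N hN] := INR_unbounded M; have [k hk] := exp2_beats_linear N.
pose X := 'I_k; pose G := apex_incidence X; pose H := star (X + {set X})%type.
have cG : connected G := @apex_incidence_connected X.
have cH : connected H := @star_connected _.
have lowH : (k + 2 ^ k <= (mdim H).+1)%N.
  apply: leq_trans (star_mdim _); rewrite card_sum card_ord leq_add2l.
  by have := card_powertype X; rewrite card_ord.
have G0 : (0 < mdim G)%N by apply: (mdim_gt0 cG (x := None) (y := Some (inr set0))).
have upG : (adim G <= k.+1)%N by have := @apex_incidence_adim X; rewrite card_ord.
have /andP [HmB HBA] := dimension_chain cH; have /andP [GmB GBA] := dimension_chain cG.
have ratio a b : (mdim H <= a)%N -> (mdim G <= b)%N -> (b <= adim G)%N -> INR a / INR b > M.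
  move=> Ha Gb bG; apply: ratio_gt hN _ _; first exact: leq_trans G0 Gb.
  have : (N * b <= N * k.+1)%N by rewrite leq_mul2l (leq_trans bG upG) orbT.
  lia.
exists G, H; do 3!split => //; first exact: star_subgraph.
split; first exact: ratio (leqnn _) (leqnn _) (leq_trans GmB GBA).
split; first exact: ratio HmB GmB GBA.
exact: ratio (leq_trans HmB HBA) (leq_trans GmB GBA) (leqnn _).
Qed.
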